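(* Let $(x_i,v_i)_{i=1}^N$ be differentiable functions of $t$ (on some time interval) with values in $\mathbb{R}^3$, satisfying $\dot x_i=v_i$ for all $i\in\{1,\dots,N\}$. Assume that, for all $i,j\in\{1,\dots,N\}$ and all times considered, $$\|x_i\|=1,\quad \langle v_i,x_i\rangle=0,\quad \|v_i\|\le\mathcal{V}_{max},\quad x_i+x_j\ne0.$$ Then, for a positive constant $C$ independent of $t$, $$\bigg\|\frac{d}{dt}\Big[\frac{1}{1+\langle x_i,x_j\rangle}(x_i\times x_j)(x_i\times x_j)^T\Big]\bigg\|\le\frac{C}{\|x_i+x_j\|}\mathcal{V}_{max}.$$
   Context: $\|\cdot\|$ is the Euclidean norm on vectors and the induced matrix norm on $3\times3$ matrices; $\times$ is the cross product; vectors are columns; $\mathcal{V}_{max}\ge0$ is a constant. *)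

From HB Require Import structures.
From mathcomp Require Import all_boot all_order all_algebra.
From mathcomp Require Import all_classical all_reals all_analysis.
Set Implicit Arguments. Unset Strict Implicit. Unset Printing Implicit Defensive.
Import Order.TTheory GRing.Theory Num.Theory.
Import numFieldNormedType.Exports.
Local Open Scope classical_set_scope.
Local Open Scope ring_scope.

Section Defs.
Variable R : realType.

Definition dot3 (u w : 'cV[R]_3) : R := \sum_(k < 3) u k 0 * w k 0.

Definition enorm3 (u : 'cV[R]_3) : R := Num.sqrt (dot3 u u).

Definition cross3 (u w : 'cV[R]_3) : 'cV[R]_3 :=
  \col_(k < 3)
    (if k == 0 :> nat then u 1 0 * w 2 0 - u 2 0 * w 1 0
     else if k == 1 :> nat then u 2 0 * w 0 0 - u 0 0 * w 2 0
     else u 0 0 * w 1 0 - u 1 0 * w 0 0).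

Definition opnorm3 (A : 'M[R]_3) : R :=
  sup [set enorm3 (A *m u) | u in [set u : 'cV[R]_3 | enorm3 u <= 1]].

Definition Pmat (a b : 'cV[R]_3) : 'M[R]_3 :=
  (1 + dot3 a b)^-1 *: (cross3 a b *m (cross3 a b)^T).
End Defs.

From HB Require Import structures.
From mathcomp Require Import all_boot all_order all_algebra.
From mathcomp Require Import all_classical all_reals all_analysis.
From mathcomp Require Import ring lra.
Set Implicit Arguments. Unset Strict Implicit. Unset Printing Implicit Defensive.
Import Order.TTheory GRing.Theory Num.Theory.
Import numFieldNormedType.Exports.
Local Open Scope classical_set_scope.
Local Open Scope ring_scope.

(* Write s = 1 + <a, b> and c = a x b, so that P = c c^T / s and, for unit
   vectors a and b, |a + b|^2 = 2 s.  Differentiating,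
     P' = (c' c^T + c c'^T) / s - s' c c^T / s^2.
   Since a x a = 0 we have c = a x (a + b), hence |c| <= |a + b|; moreover
   |c'| <= 2 V, and the tangency conditions <a', a> = <b', b> = 0 give
   s' = <a', a + b> + <a + b, b'>, so |s'| <= 2 V |a + b|.  Each of the two
   terms of P' is therefore bounded by 8 V / |a + b|. *)

Section MatrixDerivatives.
Variable R : realType.
Implicit Types t : R.

Lemma is_derive_mul (f g : R -> R) df dg t :
  is_derive t 1 f df -> is_derive t 1 g dg ->
  is_derive t 1 (fun s => f s * g s) (f t * dg + g t * df).
Proof. exact: is_deriveM. Qed.

Lemma is_derive_mx m n (A : R -> 'M[R]_(m, n)) (dA : 'M[R]_(m, n)) t :
  (forall i j, is_derive t 1 (fun s => A s i j) (dA i j)) -> is_derive t 1 A dA.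
Proof.
move=> dAij; have dA_ex : derivable A t 1.
  by apply/derivable_mxP => i j; case: (dAij i j).
apply: DeriveDef => //; rewrite derive_mx //; apply/matrixP => i j.
by rewrite mxE; apply: (@derive_val _ _ _ _ _ _ _ (dAij i j)).
Qed.

Lemma is_derive_mx_entry m n (A : R -> 'M[R]_(m, n)) (dA : 'M[R]_(m, n)) t i j :
  is_derive t 1 A dA -> is_derive t 1 (fun s => A s i j) (dA i j).
Proof.
move=> dA_def; have dA_ex : derivable A t 1 by case: dA_def.
apply: DeriveDef; first by move/derivable_mxP: dA_ex; apply.
by rewrite -(@derive_val _ _ _ _ _ _ _ dA_def) derive_mx // mxE.
Qed.

Lemma is_derive_trmx m n (A : R -> 'M[R]_(m, n)) (dA : 'M[R]_(m, n)) t :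
  is_derive t 1 A dA -> is_derive t 1 (fun s => (A s)^T) dA^T.
Proof.
move=> dA_def; apply: is_derive_mx => i j; rewrite mxE.
by under eq_fun do rewrite mxE; apply: is_derive_mx_entry.
Qed.

Lemma is_derive_mulmx m n p (A : R -> 'M[R]_(m, n)) (B : R -> 'M[R]_(n, p)) dA dB t :
  is_derive t 1 A dA -> is_derive t 1 B dB ->
  is_derive t 1 (fun s => A s *m B s) (dA *m B t + A t *m dB).
Proof.
move=> dA_def dB_def; apply: is_derive_mx => i j.
have -> : (fun s => (A s *m B s) i j) = \sum_(k < n) (fun s => A s i k * B s k j).
  by apply/funext => s; rewrite mxE fct_sumE.
apply: is_derive_eq.
  apply: is_derive_sum => k.
  exact: is_derive_mul (is_derive_mx_entry i k dA_def) (is_derive_mx_entry k j dB_def).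
by rewrite !mxE -big_split; apply: eq_bigr => k _; rewrite addrC mulrC.
Qed.

Lemma is_derive_scalemx m n (f : R -> R) (A : R -> 'M[R]_(m, n)) df dA t :
  is_derive t 1 f df -> is_derive t 1 A dA ->
  is_derive t 1 (fun s => f s *: A s) (f t *: dA + df *: A t).
Proof.
move=> df_def dA_def; apply: is_derive_mx => i j; rewrite !mxE.
under eq_fun do rewrite mxE.
apply: is_derive_eq; first exact: is_derive_mul df_def (is_derive_mx_entry i j dA_def).
by rewrite [_ * df]mulrC.
Qed.

End MatrixDerivatives.

Section Euclidean3.
Variable R : realType.
Implicit Types (u w a b : 'cV[R]_3) (M : 'M[R]_3).

Lemma sum3 (F : 'I_3 -> R) : \sum_(k < 3) F k = F 0 + F 1 + F 2.
Proof.
rewrite !big_ord_recr big_ord0 /= add0r.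
by congr (_ + _ + _); congr F; apply: val_inj.
Qed.

Lemma dot3E u w : dot3 u w = u 0 0 * w 0 0 + u 1 0 * w 1 0 + u 2 0 * w 2 0.
Proof. by rewrite /dot3 sum3. Qed.

Lemma dot3_mulmx u w : dot3 u w = (u^T *m w) 0 0.
Proof. by rewrite mxE; apply: eq_bigr => k _; rewrite mxE. Qed.

Lemma dot3_ge0 u : 0 <= dot3 u u.
Proof. by rewrite dot3E; nra. Qed.

Lemma enorm3_ge0 u : 0 <= enorm3 u.
Proof. exact: sqrtr_ge0. Qed.

Lemma enorm3_sqr u : enorm3 u ^+ 2 = dot3 u u.
Proof. by rewrite sqr_sqrtr // dot3_ge0. Qed.

Lemma enorm3_le u (m : R) : 0 <= m -> dot3 u u <= m ^+ 2 -> enorm3 u <= m.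
Proof. by move=> m0 um; rewrite -(ger0_norm m0) -sqrtr_sqr ler_sqrt // sqr_ge0. Qed.

Lemma enorm3_gt0 u : u != 0 -> 0 < enorm3 u.
Proof.
move=> u0; rewrite sqrtr_gt0 lt_def dot3_ge0 andbT.
apply: contra u0 => /eqP uu0; apply/eqP/matrixP => k l; rewrite (ord1 l) mxE.
have sq_ge0 i : true -> 0 <= u i 0 * u i 0 by rewrite -expr2 sqr_ge0.
have uk0 : u k 0 * u k 0 = 0 := psumr_eq0P sq_ge0 uu0 isT.
by move/eqP: uk0; rewrite mulf_eq0 orbb => /eqP.
Qed.

Lemma dot3_cross3 u w :
  dot3 (cross3 u w) (cross3 u w) = dot3 u u * dot3 w w - dot3 u w ^+ 2.
Proof. by rewrite !dot3E !mxE /=; ring. Qed.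

Lemma dot3_le u w : `|dot3 u w| <= enorm3 u * enorm3 w.
Proof.
rewrite -ler_sqr ?nnegrE ?mulr_ge0 ?enorm3_ge0 // exprMn !enorm3_sqr real_normK ?num_real //.
by rewrite -subr_ge0 -dot3_cross3 dot3_ge0.
Qed.

Lemma enorm3_cross3_le u w : enorm3 (cross3 u w) <= enorm3 u * enorm3 w.
Proof.
apply: enorm3_le; first by rewrite mulr_ge0 ?enorm3_ge0.
by rewrite exprMn !enorm3_sqr dot3_cross3 lerBlDr lerDl sqr_ge0.
Qed.

Lemma dot3_addsqr u w : dot3 (u + w) (u + w) = dot3 u u + 2 * dot3 u w + dot3 w w.
Proof. by rewrite !dot3E !mxE; ring. Qed.

Lemma enorm3D_le u w : enorm3 (u + w) <= enorm3 u + enorm3 w.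
Proof.
apply: enorm3_le; first by rewrite addr_ge0 ?enorm3_ge0.
rewrite dot3_addsqr sqrrD -!enorm3_sqr lerD2r lerD2l -[X in _ <= X]mulr_natl ler_pM2l //.
exact: le_trans (ler_norm _) (dot3_le _ _).
Qed.

Lemma enorm3Z (k : R) u : enorm3 (k *: u) = `|k| * enorm3 u.
Proof.
rewrite /enorm3.
have -> : dot3 (k *: u) (k *: u) = k ^+ 2 * dot3 u u by rewrite !dot3E !mxE; ring.
by rewrite sqrtrM ?sqr_ge0 // sqrtr_sqr.
Qed.

Lemma mulmx_outer u w a : u *m w^T *m a = dot3 w a *: u.
Proof.
rewrite -mulmxA -mul_mx_scalar; congr (_ *m _).
by apply/matrixP => i j; rewrite !ord1 dot3_mulmx !mxE eqxx mulr1n.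
Qed.

Lemma opnorm3_le M (m : R) :
  (forall u, enorm3 u <= 1 -> enorm3 (M *m u) <= m) -> opnorm3 M <= m.
Proof.
move=> Mm; apply: ge_sup; last by move=> _ [u /= u1 <-]; apply: Mm.
exists (enorm3 (M *m 0)), 0 => //=.
by rewrite /enorm3 dot3E !mxE !mulr0 !addr0 sqrtr0.
Qed.

End Euclidean3.

Section PmatDerivative.
Variable R : realType.
Implicit Types (a b : R -> 'cV[R]_3) (da db : 'cV[R]_3) (t : R).

Lemma is_derive_dot3 a b da db t :
  is_derive t 1 a da -> is_derive t 1 b db ->
  is_derive t 1 (fun s => dot3 (a s) (b s)) (dot3 da (b t) + dot3 (a t) db).
Proof.
move=> da_def db_def; under eq_fun do rewrite dot3_mulmx.
apply: is_derive_eq; first exact: is_derive_mx_entry 0 0 (is_derive_mulmx (is_derive_trmx da_def) db_def).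
by rewrite mxE -!dot3_mulmx.
Qed.

Lemma is_derive_cross3 a b da db t :
  is_derive t 1 a da -> is_derive t 1 b db ->
  is_derive t 1 (fun s => cross3 (a s) (b s)) (cross3 da (b t) + cross3 (a t) db).
Proof.
move=> da_def db_def; apply: is_derive_mx => k l; rewrite (ord1 l).
under eq_fun do rewrite mxE.
have dprod i j : is_derive t 1 (fun s => a s i 0 * b s j 0)
    (a t i 0 * db j 0 + b t j 0 * da i 0).
  exact: is_derive_mul (is_derive_mx_entry i 0 da_def) (is_derive_mx_entry j 0 db_def).
rewrite !mxE; case: k => [[|[|[|k]]] Hk] //=.
all: by apply: is_derive_eq (is_deriveB (dprod _ _) (dprod _ _)) _; ring.
Qed.

Definition Pmat_deriv (a b da db : 'cV[R]_3) : 'M[R]_3 :=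
  let s := 1 + dot3 a b in
  let c := cross3 a b in
  let dc := cross3 da b + cross3 a db in
  s^-1 *: (dc *m c^T + c *m dc^T) - (s^-2 * (dot3 da b + dot3 a db)) *: (c *m c^T).

Lemma is_derive_Pmat a b da db t :
  is_derive t 1 a da -> is_derive t 1 b db -> 1 + dot3 (a t) (b t) != 0 ->
  is_derive t 1 (fun s => Pmat (a s) (b s)) (Pmat_deriv (a t) (b t) da db).
Proof.
move=> da_def db_def s0.
have dc_def := is_derive_cross3 da_def db_def.
apply: is_derive_eq.
  apply: is_derive_scalemx; last exact: is_derive_mulmx dc_def (is_derive_trmx dc_def).
  apply: (@is_deriveV _ (fun s => 1 + dot3 (a s) (b s))) => //.
  exact: (is_deriveD (is_derive_cst (1 : R) t 1) (is_derive_dot3 da_def db_def)).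
by rewrite /Pmat_deriv add0r !scaleNr.
Qed.

Lemma derive1_Pmat a b da db t :
  is_derive t 1 a da -> is_derive t 1 b db -> 1 + dot3 (a t) (b t) != 0 ->
  derive1 (fun s => Pmat (a s) (b s)) t = Pmat_deriv (a t) (b t) da db.
Proof. by move=> da_def db_def s0; rewrite derive1E; apply: derive_val; apply: is_derive_Pmat. Qed.

End PmatDerivative.

Section PmatDerivativeBound.
Variable R : realType.
Implicit Types (a b da db c dc u : 'cV[R]_3).

Lemma opnorm3_outer_deriv_le (s ds : R) c dc : 0 < s ->
  opnorm3 (s^-1 *: (dc *m c^T + c *m dc^T) - (s^-2 * ds) *: (c *m c^T))
    <= 2 * enorm3 c * enorm3 dc / s + `|ds| * enorm3 c ^+ 2 / s ^+ 2.
Proof.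
move=> s_gt0; apply: opnorm3_le => u u_le1.
have dot_le w : `|dot3 w u| <= enorm3 w.
  by apply: le_trans (dot3_le w u) _; rewrite ler_piMr ?enorm3_ge0.
rewrite mulmxBl -!scalemxAl mulmxDl !mulmx_outer -scaleNr.
apply: le_trans (enorm3D_le _ _) _.
rewrite !enorm3Z; apply: lerD.
  rewrite gtr0_norm ?invr_gt0 // mulrC ler_pM2r ?invr_gt0 //.
  apply: le_trans (enorm3D_le _ _) _; rewrite !enorm3Z.
  have := dot_le c; have := dot_le dc; have := enorm3_ge0 c; have := enorm3_ge0 dc.
  nra.
rewrite normrN normrM gtr0_norm ?invr_gt0 ?exprn_gt0 // -exprVn.
have cu_le : `|dot3 c u| * enorm3 c <= enorm3 c ^+ 2.
  by rewrite expr2 ler_wpM2r ?enorm3_ge0.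
have : 0 <= s^-1 ^+ 2 * `|ds| by rewrite mulr_ge0 ?sqr_ge0.
nra.
Qed.

Lemma dot3_unit a : enorm3 a = 1 -> dot3 a a = 1.
Proof. by move=> a1; rewrite -enorm3_sqr a1 expr1n. Qed.

Lemma enorm3_add_unit_sqr a b : enorm3 a = 1 -> enorm3 b = 1 ->
  enorm3 (a + b) ^+ 2 = 2 * (1 + dot3 a b).
Proof.
move=> /dot3_unit aa /dot3_unit bb.
by rewrite enorm3_sqr dot3_addsqr aa bb; ring.
Qed.

Lemma dot3_unit_add1_gt0 a b : enorm3 a = 1 -> enorm3 b = 1 -> a + b != 0 ->
  0 < 1 + dot3 a b.
Proof.
move=> a1 b1 /enorm3_gt0 n_gt0; have := enorm3_add_unit_sqr a1 b1; nra.
Qed.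

Lemma enorm3_cross3_unit_le a b : enorm3 a = 1 -> enorm3 (cross3 a b) <= enorm3 (a + b).
Proof.
move=> a1; have -> : cross3 a b = cross3 a (a + b).
  by apply/matrixP => i j; rewrite !mxE; case: i => [[|[|[|i]]] Hi] //=; ring.
by apply: le_trans (enorm3_cross3_le _ _) _; rewrite a1 mul1r.
Qed.

Lemma enorm3_cross3_deriv_le a b da db (V : R) :
  enorm3 a = 1 -> enorm3 b = 1 -> enorm3 da <= V -> enorm3 db <= V ->
  enorm3 (cross3 da b + cross3 a db) <= 2 * V.
Proof.
move=> a1 b1 daV dbV; apply: le_trans (enorm3D_le _ _) _.
have := enorm3_cross3_le da b; have := enorm3_cross3_le a db.
rewrite a1 b1 mulr1 mul1r; lra.
Qed.

Lemma dot3_tangent_deriv_le a b da db (V : R) :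
  dot3 da a = 0 -> dot3 db b = 0 -> enorm3 da <= V -> enorm3 db <= V ->
  `|dot3 da b + dot3 a db| <= 2 * V * enorm3 (a + b).
Proof.
move=> da_a db_b daV dbV.
have -> : dot3 da b + dot3 a db = dot3 da (a + b) + dot3 (a + b) db.
  move: da_a db_b; rewrite !dot3E !mxE; lra.
apply: le_trans (ler_normD _ _) _.
have := dot3_le da (a + b); have := dot3_le (a + b) db; have := enorm3_ge0 (a + b).
nra.
Qed.

Lemma opnorm3_Pmat_deriv_le a b da db (V : R) :
  enorm3 a = 1 -> enorm3 b = 1 -> dot3 da a = 0 -> dot3 db b = 0 ->
  enorm3 da <= V -> enorm3 db <= V -> a + b != 0 ->
  opnorm3 (Pmat_deriv a b da db) <= 16 * V / enorm3 (a + b).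
Proof.
move=> a1 b1 da_a db_b daV dbV ab0.
have n_gt0 := enorm3_gt0 ab0.
have n_sqr := enorm3_add_unit_sqr a1 b1.
have s_gt0 := dot3_unit_add1_gt0 a1 b1 ab0.
apply: le_trans (opnorm3_outer_deriv_le _ _ _ s_gt0) _.
have c_le := enorm3_cross3_unit_le b a1.
have dc_le := enorm3_cross3_deriv_le a1 b1 daV dbV.
have ds_le := dot3_tangent_deriv_le da_a db_b daV dbV.
set n := enorm3 (a + b) in n_gt0 n_sqr c_le ds_le *.
set C := enorm3 (cross3 a b) in c_le *.
set D := enorm3 (cross3 da b + cross3 a db) in dc_le *.
set ds := `|dot3 da b + dot3 a db| in ds_le *.
have -> : 1 + dot3 a b = n ^+ 2 / 2 by rewrite n_sqr; field.
have n0 : n != 0 by rewrite gt_eqF.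
rewrite ler_pdivlMr //.
have -> : (2 * C * D / (n ^+ 2 / 2) + ds * C ^+ 2 / (n ^+ 2 / 2) ^+ 2) * n =
    4 * (C / n) * D + 4 * (ds / n) * (C / n) ^+ 2 by field.
have x_le1 : C / n <= 1 by rewrite ler_pdivrMr // mul1r.
have y_le : ds / n <= 2 * V by rewrite ler_pdivrMr.
have x_ge0 : 0 <= C / n by rewrite divr_ge0 ?enorm3_ge0 // ltW.
have y_ge0 : 0 <= ds / n by rewrite divr_ge0 ?normr_ge0 // ltW.
have D_ge0 : 0 <= D := enorm3_ge0 _.
have xD_le : C / n * D <= 2 * V by rewrite -[2 * V]mul1r ler_pM.
have yx2_le : ds / n * (C / n) ^+ 2 <= 2 * V.
  by rewrite -[2 * V]mulr1 ler_pM // ?sqr_ge0 // expr_le1.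
lra.
Qed.

End PmatDerivativeBound.

Theorem lemmaB1 :
  forall (R : realType), exists C : R, 0 < C /\
  forall (N : nat) (I : set R) (Vmax : R)
         (x v : 'I_N -> R -> 'cV[R]_3),
  open I -> is_interval I -> 0 <= Vmax ->
  (forall i t, I t -> is_derive t 1 (x i) (v i t)) ->
  (forall i t, I t -> enorm3 (x i t) = 1) ->
  (forall i t, I t -> dot3 (v i t) (x i t) = 0) ->
  (forall i t, I t -> enorm3 (v i t) <= Vmax) ->
  (forall i j t, I t -> x i t + x j t != 0) ->
  forall i j t, I t ->
    opnorm3 (derive1 (fun s => Pmat (x i s) (x j s)) t)
      <= C / enorm3 (x i t + x j t) * Vmax.
Proof.
move=> R; exists 16; split => // N I Vmax x v _ _ _ dx x1 v_tan vV x_add0 i j t It.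
have s_gt0 := dot3_unit_add1_gt0 (x1 i t It) (x1 j t It) (x_add0 i j t It).
rewrite (derive1_Pmat (dx i t It) (dx j t It) (lt0r_neq0 s_gt0)) mulrAC.
by apply: opnorm3_Pmat_deriv_le; rewrite ?x1 ?v_tan ?vV ?x_add0.
Qed.
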